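(* Let $\langle\mathcal{D},\sigma,\varphi\rangle$ be a hybrid temporal achievement causal setting. Then $$\mathcal{D}\models \mathit{CausesDir}^{\mathit{prim}}_{\mathit{temp}}(a_1,ts_1,\varphi,\sigma)\land\mathit{CausesDir}^{\mathit{prim}}_{\mathit{temp}}(a_2,ts_2,\varphi,\sigma)\supset a_1=a_2\land ts_1=ts_2$$ (free variables universally quantified).
   Context: Hybrid temporal situation calculus (HTSC): $S_0$ initial situation, $do(a,s)$ successor situation, $do([a_1,\dots,a_n],s)$ the nesting. $s\sqsubset s'$: $s'$ reachable from $s$ by one or more actions; $s\sqsubseteq s'$: $s\sqsubset s'\lor s=s'$. $\mathit{time}(a(\vec x,t))=t$, $\mathit{start}(do(a,s))=\mathit{time}(a)$. $\mathit{Exec}(s)\doteq\forall a,s'.(do(a,s')\sqsubseteq s\supset\mathit{Poss}(a,s')\land\mathit{start}(s')\le\mathit{time}(a))$; $s<s'$ abbreviates $s\sqsubset s'\land\mathit{Exec}(s')$; $s\le s'$ abbreviates $s<s'\lor s=s'$. $\mathit{timeStamp}(S_0)=0$, $\mathit{timeStamp}(do(a,s))=\mathit{timeStamp}(s)+1$. A hybrid basic action theory $\mathcal{D}$ contains initial-state, precondition, successor-state (discrete fluents), state evolution (temporal fluents), unique-names and foundational axioms. A temporal fluent $f$ has state evolution axiom $f(\vec x,t,s)=y\equiv[\bigvee_i(\gamma^f_i(\vec x,s)\land\delta_i(\vec x,y,t,s))\lor(y=f(\vec x,\mathit{start}(s),s)\land\neg\bigvee_i\gamma^f_i(\vec x,s))]$,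 where the contexts $\gamma_i^f$ are formulas over discrete fluents and are mutually exclusive (at most one holds in any situation). An effect $\varphi$ is a situation- and time-suppressed formula, uniform in the situation, constraining the value of one primitive temporal fluent $f$; $\varphi[t,s]$ restores time $t$ and situation $s$; for a situation-suppressed $\psi$, $\psi[s]$ restores $s$. $\mathit{CausesDir}(a,ts,\psi,s)\doteq\exists s_a.\,\mathit{timeStamp}(s_a)=ts\land(S_0<do(a,s_a)\le s)\land\neg\psi[s_a]\land\forall s'.(do(a,s_a)\le s'\le s\supset\psi[s'])$. $\mathit{end}(s',s)=\mathit{start}(s')$ if $s'=s$; $=\mathit{time}(a)$ if $do(a,s')\le s$. $\mathit{AchvSitAux}(s_\varphi,\varphi,s)\doteq\varphi[\mathit{end}(s_\varphi,s),s_\varphi]\land\forall s',t.(s_\varphi<s'\le s\land\mathit{start}(s')\le t\le\mathit{end}(s',s)\supset\varphi[t,s'])$; $\mathit{AchvSit}(s_\varphi,\varphi,s)\doteq\mathit{AchvSitAux}(s_\varphi,\varphi,s)\land\neg\exists s''.(s''<s_\varphi\land\mathit{AchvSitAux}(s'',\varphi,s))$. $\mathit{CausesDir}^{\mathit{prim}}_{\mathit{temp}}(a,ts,\varphi,s)\doteq\exists s_\varphi.\,\mathit{AchvSit}(s_\varphi,\varphi,s)\land\exists i.\,\mathit{CausesDir}(a,ts,\gamma^f_i,s_\varphi)$, where $f$ is the fluent in $\varphi$. Hybrid temporal achievement causal setting $\langle\mathcal{D},\sigma,\varphi\rangle$: $\sigma=do([\alpha_1,\dots,\alpha_n],S_0)$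 ground, $n\ge1$, and $\mathcal{D}\models\mathit{Exec}(\sigma)\land\neg\varphi[\mathit{start}(S_0),S_0]\land\neg\varphi[\mathit{time}(\alpha_1),S_0]\land\varphi[\mathit{start}(\sigma),\sigma]$. *)

(* Situations are interpreted in the (standard, up to isomorphism) model of the
   foundational axioms: finite sequences of actions, S0 = nil, do(a,s) = a :: s. *)
From Stdlib Require Import Reals List.
Open Scope R_scope.
Set Implicit Arguments.

Section HTSC.
Variable Act : Type.
Variable time : Act -> R.
Variable Poss : Act -> list Act -> Prop.
Variable start0 : R.

Definition Sit := list Act.
Definition S0 : Sit := nil.
Definition do_ (a : Act) (s : Sit) : Sit := a :: s.
(* do([a1,...,an], s) = do(an, ... do(a1, s)) *)
Definition do_seq (l : list Act) (s : Sit) : Sit :=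
  fold_left (fun s a => do_ a s) l s.

Definition start (s : Sit) : R :=
  match s with nil => start0 | a :: _ => time a end.
Definition timeStamp (s : Sit) : nat := length s.

Definition sqsub (s s' : Sit) : Prop := exists l, l <> nil /\ s' = l ++ s.
Definition sqsubeq (s s' : Sit) : Prop := sqsub s s' \/ s = s'.

Definition Exec (s : Sit) : Prop :=
  forall a s', sqsubeq (do_ a s') s -> Poss a s' /\ start s' <= time a.

Definition slt (s s' : Sit) : Prop := sqsub s s' /\ Exec s'.
Definition sle (s s' : Sit) : Prop := slt s s' \/ s = s'.

Definition CausesDir (a : Act) (ts : nat) (psi : Sit -> Prop) (s : Sit) : Prop :=
  exists sa, timeStamp sa = ts /\
    (slt S0 (do_ a sa) /\ sle (do_ a sa) s) /\
    ~ psi sa /\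
    (forall s', sle (do_ a sa) s' /\ sle s' s -> psi s').

(* end(s',s) = t, as a (partial, functional) relation:
   end(s',s) = start(s') if s' = s;  = time(a) if do(a,s') <= s. *)
Definition EndIs (s' s : Sit) (t : R) : Prop :=
  (s' = s /\ t = start s') \/ (exists a, sle (do_ a s') s /\ t = time a).

Definition AchvSitAux (sphi : Sit) (phi : R -> Sit -> Prop) (s : Sit) : Prop :=
  (exists e, EndIs sphi s e /\ phi e sphi) /\
  (forall s' t, slt sphi s' /\ sle s' s ->
     (exists e, EndIs s' s e /\ start s' <= t /\ t <= e) -> phi t s').

Definition AchvSit (sphi : Sit) (phi : R -> Sit -> Prop) (s : Sit) : Prop :=
  AchvSitAux sphi phi s /\ ~ (exists s'', slt s'' sphi /\ AchvSitAux s'' phi s).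

(* gamma i : the i-th context of the state evolution axiom of the fluent
   mentioned in phi (instantiated at the fluent's arguments). *)
Definition CausesDirPrimTemp (I : Type) (gamma : I -> Sit -> Prop)
  (a : Act) (ts : nat) (phi : R -> Sit -> Prop) (s : Sit) : Prop :=
  exists sphi, AchvSit sphi phi s /\ exists i, CausesDir a ts (gamma i) sphi.
End HTSC.

Definition StateEvolution (Act X V I : Type) (start : list Act -> R)
  (f : X -> R -> list Act -> V) (gamma : I -> X -> list Act -> Prop)
  (delta : I -> X -> V -> R -> list Act -> Prop) : Prop :=
  forall x t s y,
    f x t s = y <->
    ((exists i, gamma i x s /\ delta i x y t s) \/
     (y = f x (start s) s /\ ~ (exists i, gamma i x s))).

Definition MutuallyExclusive (Act X I : Type) (gamma : I -> X -> list Act -> Prop) : Prop :=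
  forall i j x s, gamma i x s -> gamma j x s -> i = j.

(* An effect constraining the value of the primitive temporal fluent f
   (at ground arguments x0): phi[t,s] := P(f(x0,t,s)). *)
Definition effect (Act X V : Type) (f : X -> R -> list Act -> V) (x0 : X)
  (P : V -> Prop) : R -> list Act -> Prop :=
  fun t s => P (f x0 t s).

From Stdlib Require Import Reals List Lia Classical.
Open Scope R_scope.
Set Implicit Arguments.

(* In the list model, s ⊑ s' means that s is a suffix of s', and the suffixes
   of an executable situation are executable and totally ordered by <=.
   Hence the minimal achievement situation s_phi of phi in sigma is unique,
   only one context gamma_i holds in it (they are mutually exclusive), and the
   situation do(a, s_a) after which gamma_i holds without interruption up to
   s_phi is unique too: if two such situations existed, the earlier one would
   force gamma_i at the predecessor of the later one.  Only uniqueness is at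
   stake. *)

Definition suffix {A : Type} (s t : list A) : Prop := exists l, t = l ++ s.

Section Suffix.
Context {A : Type}.
Implicit Types (a : A) (s t u : list A).

Lemma suffix_refl s : suffix s s.
Proof. now exists nil. Qed.

Lemma suffix_trans s t u : suffix s t -> suffix t u -> suffix s u.
Proof. intros [l1 ->] [l2 ->]. exists (l2 ++ l1). now rewrite app_assoc. Qed.

Lemma suffix_cons_l a s t : suffix (a :: s) t -> suffix s t.
Proof. intros [l ->]. exists (l ++ a :: nil). now rewrite <- app_assoc. Qed.

Lemma suffix_length s t : suffix s t -> (length s <= length t)%nat.
Proof. intros [l ->]. rewrite length_app. lia. Qed.

Lemma suffix_total s1 s2 t : suffix s1 t -> suffix s2 t -> suffix s1 s2 \/ suffix s2 s1.
Proof.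
  intros [l1 ->] [l2 E]. apply app_eq_app in E.
  destruct E as [l [[_ E] | [_ E]]]; [left | right]; now exists l.
Qed.

Lemma suffix_length_inj s1 s2 t :
  suffix s1 t -> suffix s2 t -> length s1 = length s2 -> s1 = s2.
Proof.
  intros H1 H2 Hlen.
  destruct (suffix_total H1 H2) as [[l E] | [l E]]; subst;
    rewrite length_app in Hlen; destruct l; simpl in *; auto; lia.
Qed.

Lemma suffix_between a s u t :
  suffix (a :: s) t -> suffix u t -> (length s < length u)%nat -> suffix (a :: s) u.
Proof.
  intros Ha Hu Hlen. destruct (suffix_total Ha Hu) as [H | H]; [exact H |].
  replace u with (a :: s); [apply suffix_refl |].
  symmetry. apply (suffix_length_inj Hu Ha).
  apply suffix_length in H. simpl in *. lia.
Qed.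

Lemma sqsubeq_iff_suffix s t : sqsubeq s t <-> suffix s t.
Proof.
  split.
  - intros [[l [_ ->]] | ->]; [now exists l | apply suffix_refl].
  - intros [[| x l] ->]; [now right |].
    left. exists (x :: l). split; [discriminate | reflexivity].
Qed.

Lemma sqsub_of_suffix s t : suffix s t -> s <> t -> sqsub s t.
Proof.
  intros [l ->] Hne. exists l. split; [| reflexivity].
  intros ->. now apply Hne.
Qed.

End Suffix.

Section Situations.
Variables (Act : Type) (time : Act -> R) (Poss : Act -> list Act -> Prop) (start0 : R).

Local Notation Exec := (Exec time Poss start0).
Local Notation sle := (sle time Poss start0).
Local Notation AchvSitAux := (AchvSitAux time Poss start0).
Local Notation AchvSit := (AchvSit time Poss start0).
Local Notation CausesDir := (CausesDir time Poss start0).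

Lemma Exec_suffix (s t : list Act) : Exec t -> suffix s t -> Exec s.
Proof.
  intros Ht Hst a s' H. apply Ht, sqsubeq_iff_suffix.
  apply sqsubeq_iff_suffix in H. exact (suffix_trans H Hst).
Qed.

Lemma sle_suffix (s t : list Act) : sle s t -> suffix s t.
Proof.
  intros [[H _] | ->]; [| apply suffix_refl].
  apply sqsubeq_iff_suffix. now left.
Qed.

Lemma sle_of_suffix (s t : list Act) : Exec t -> suffix s t -> sle s t.
Proof.
  intros Ht Hst. destruct (classic (s = t)) as [-> | Hne]; [now right |].
  left. split; [exact (sqsub_of_suffix Hst Hne) | exact Ht].
Qed.

Lemma AchvSitAux_suffix sphi phi (s : list Act) : AchvSitAux sphi phi s -> suffix sphi s.
Proof.
  intros [[e [[[-> _] | [a [H _]]] _]] _]; [apply suffix_refl |].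
  exact (suffix_cons_l (sle_suffix H)).
Qed.

Lemma AchvSit_minimal sphi sphi' phi (s : list Act) :
  Exec s -> AchvSitAux sphi' phi s -> AchvSit sphi phi s -> suffix sphi' sphi ->
  sphi' = sphi.
Proof.
  intros Hs Haux [Hach Hmin] Hsuf.
  destruct (classic (sphi' = sphi)) as [E | Hne]; [exact E |].
  exfalso. apply Hmin. exists sphi'. split; [| exact Haux]. split.
  - exact (sqsub_of_suffix Hsuf Hne).
  - exact (Exec_suffix Hs (AchvSitAux_suffix Hach)).
Qed.

Lemma AchvSit_unique sphi1 sphi2 phi (s : list Act) :
  Exec s -> AchvSit sphi1 phi s -> AchvSit sphi2 phi s -> sphi1 = sphi2.
Proof.
  intros Hs H1 H2.
  destruct (suffix_total (AchvSitAux_suffix (proj1 H1)) (AchvSitAux_suffix (proj1 H2)))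
    as [H | H].
  - exact (AchvSit_minimal Hs (proj1 H1) H2 H).
  - symmetry. exact (AchvSit_minimal Hs (proj1 H2) H1 H).
Qed.

Lemma sle_interval a sa sb (s : list Act) :
  Exec s -> suffix (a :: sa) s -> suffix sb s -> (length sa < length sb)%nat ->
  sle (a :: sa) sb /\ sle sb s.
Proof.
  intros Hs Ha Hb Hlen. split.
  - exact (sle_of_suffix (Exec_suffix Hs Hb) (suffix_between Ha Hb Hlen)).
  - exact (sle_of_suffix Hs Hb).
Qed.

Lemma CausesDir_holds psi a ts (s : list Act) : CausesDir a ts psi s -> psi s.
Proof.
  intros [sa [_ [[_ Hle] [_ Hpsi]]]]. apply Hpsi. split; [exact Hle | now right].
Qed.

Lemma CausesDir_unique psi a b ts ts' (s : list Act) :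
  Exec s -> CausesDir a ts psi s -> CausesDir b ts' psi s -> a = b /\ ts = ts'.
Proof.
  intros Hs [sa [<- [[_ Ha] [Hna Hpsia]]]] [sb [<- [[_ Hb] [Hnb Hpsib]]]].
  unfold timeStamp, do_ in *.
  apply sle_suffix in Ha, Hb.
  assert (Hlen : length sa = length sb).
  { destruct (Nat.lt_trichotomy (length sa) (length sb)) as [H | [H | H]]; [| exact H |].
    - exfalso. exact (Hnb (Hpsia sb (sle_interval Hs Ha (suffix_cons_l Hb) H))).
    - exfalso. exact (Hna (Hpsib sa (sle_interval Hs Hb (suffix_cons_l Ha) H))). }
  assert (Hab : a :: sa = b :: sb) by (apply (suffix_length_inj Ha Hb); simpl; lia).
  injection Hab as -> ->. now split.
Qed.

End Situations.

Theorem theorem5p3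
  (Act : Type) (time : Act -> R) (Poss : Act -> list Act -> Prop) (start0 : R)
  (X V I : Type) (f : X -> R -> list Act -> V)
  (gamma : I -> X -> list Act -> Prop)
  (delta : I -> X -> V -> R -> list Act -> Prop)
  (x0 : X) (P : V -> Prop)
  (alpha1 : Act) (alphas : list Act) :
  StateEvolution (start time start0) f gamma delta ->
  MutuallyExclusive gamma ->
  let phi := effect f x0 P in
  let sigma := do_seq (alpha1 :: alphas) (S0 Act) in
  (* the hybrid temporal achievement causal setting conditions *)
  Exec time Poss start0 sigma ->
  ~ phi (start time start0 (S0 Act)) (S0 Act) ->
  ~ phi (time alpha1) (S0 Act) ->
  phi (start time start0 sigma) sigma ->
  forall (a1 a2 : Act) (ts1 ts2 : nat),
    CausesDirPrimTemp time Poss start0 (fun i s => gamma i x0 s) a1 ts1 phi sigma ->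
    CausesDirPrimTemp time Poss start0 (fun i s => gamma i x0 s) a2 ts2 phi sigma ->
    a1 = a2 /\ ts1 = ts2.
Proof.
  intros _ Hexcl phi sigma Hsigma _ _ _ a1 a2 ts1 ts2
    [sphi [Hach1 [i Hc1]]] [sphi' [Hach2 [j Hc2]]].
  pose proof (AchvSit_unique Hsigma Hach1 Hach2) as <-.
  assert (Hsphi : Exec time Poss start0 sphi)
    by exact (Exec_suffix Hsigma (AchvSitAux_suffix (proj1 Hach1))).
  pose proof (Hexcl _ _ _ _ (CausesDir_holds Hc1) (CausesDir_holds Hc2)) as <-.
  exact (CausesDir_unique Hsphi Hc1 Hc2).
Qed.
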